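(* For every $\varkappa>0$, the function $\lambda\mapsto\partial_\lambda p(\lambda,\varkappa)$ has exactly one zero $\lambda_0$ in the open interval $(-2K,0)$, and at this zero $\partial_\lambda^2p(\lambda_0,\varkappa)<0$.
   Context: Fix real $J_1<J_2<J_3$; $\rho=\tfrac12\sqrt{J_3-J_1}$, $k=\sqrt{(J_2-J_1)/(J_3-J_1)}\in(0,1)$, $K=K(k)$ the complete elliptic integral of the first kind. $w_1(\lambda)=\rho/\mathrm{sn}(\lambda,k)$, $w_2(\lambda)=\rho\,\mathrm{dn}(\lambda,k)/\mathrm{sn}(\lambda,k)$, $w_3(\lambda)=\rho\,\mathrm{cn}(\lambda,k)/\mathrm{sn}(\lambda,k)$ (Jacobi elliptic functions of modulus $k$). For real $\lambda\in(-2K,0)$ and $\varkappa>0$, $p(\lambda,\varkappa)=\varkappa w_3(\lambda)-2w_1(\lambda)w_2(\lambda)$. *)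

From Stdlib Require Import Reals Lra ClassicalEpsilon.
From Coquelicot Require Import Coquelicot.
Open Scope R_scope.

Definition ellF (k phi : R) : R :=
  RInt (fun t => / sqrt (1 - k ^ 2 * sin t ^ 2)) 0 phi.

Definition ellK (k : R) : R := ellF k (PI / 2).

(* Jacobi amplitude: am(x, k) is the phi with F(phi, k) = x
   (F(., k) is an increasing bijection R -> R for 0 <= k < 1). *)
Definition jam (k x : R) : R :=
  epsilon (inhabits 0) (fun phi => ellF k phi = x).

Definition jsn (k x : R) : R := sin (jam k x).
Definition jcn (k x : R) : R := cos (jam k x).
Definition jdn (k x : R) : R := sqrt (1 - k ^ 2 * jsn k x ^ 2).

Definition rho (J1 J3 : R) : R := sqrt (J3 - J1) / 2.
Definition kmod (J1 J2 J3 : R) : R := sqrt ((J2 - J1) / (J3 - J1)).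

Definition w1 (J1 J2 J3 l : R) : R := rho J1 J3 / jsn (kmod J1 J2 J3) l.
Definition w2 (J1 J2 J3 l : R) : R :=
  rho J1 J3 * jdn (kmod J1 J2 J3) l / jsn (kmod J1 J2 J3) l.
Definition w3 (J1 J2 J3 l : R) : R :=
  rho J1 J3 * jcn (kmod J1 J2 J3) l / jsn (kmod J1 J2 J3) l.

Definition pfun (J1 J2 J3 l kappa : R) : R :=
  kappa * w3 J1 J2 J3 l - 2 * w1 J1 J2 J3 l * w2 J1 J2 J3 l.

(* Substitute phi = am(lambda), so that dphi/dlambda = dn.  Then dp/dlambda factors as
   [- rho dn / sn^2] times [kappa - 2 rho cot(phi) (dn + 1/dn)].  For lambda in (-2K, 0)
   the amplitude phi ranges over (-PI, 0), where the first factor is negative and the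
   second is strictly increasing (by an elementary quartic inequality) and changes sign
   between the endpoints.  Hence dp/dlambda has a single zero, and there its derivative is
   the negative first factor times dn times the positive derivative of the second. *)

From Stdlib Require Import Reals Lra Psatz ClassicalEpsilon Ranalysis5.
From Coquelicot Require Import Coquelicot.
Open Scope R_scope.

Definition delta (k phi : R) : R := sqrt (1 - k ^ 2 * sin phi ^ 2).

Lemma RInt_reflect (f : R -> R) (c a b : R) :
  (forall a b, ex_RInt f a b) -> (forall x, f (c - x) = f x) ->
  RInt f (c - a) (c - b) = RInt f b a.
Proof.
  intros hf hsym.
  replace (c - a) with (-1 * a + c) by ring.
  replace (c - b) with (-1 * b + c) by ring.
  rewrite <- RInt_comp_lin by apply hf.
  rewrite <- (opp_RInt_swap f), <- (RInt_opp f) by apply hf.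
  apply RInt_ext; intros x _.
  replace (-1 * x + c) with (c - x) by ring.
  rewrite hsym. change (-1 * f x = - f x). ring.
Qed.

Section JacobiAmplitude.

Variable k : R.
Hypothesis hk : k ^ 2 < 1.

Lemma delta_sq_pos phi : 0 < 1 - k ^ 2 * sin phi ^ 2.
Proof.
  pose proof (pow2_ge_0 k). pose proof (pow2_ge_0 (cos phi)).
  pose proof (sin2_cos2 phi). unfold Rsqr in *. nra.
Qed.

Lemma delta_pos phi : 0 < delta k phi.
Proof. apply sqrt_lt_R0, delta_sq_pos. Qed.

Lemma delta_le_1 phi : delta k phi <= 1.
Proof.
  rewrite <- sqrt_1. apply sqrt_le_1_alt.
  pose proof (pow2_ge_0 k). pose proof (pow2_ge_0 (sin phi)). nra.
Qed.

Lemma delta_sqr phi : delta k phi ^ 2 = 1 - k ^ 2 * sin phi ^ 2.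
Proof. apply pow2_sqrt. left; apply delta_sq_pos. Qed.

Lemma delta_opp phi : delta k (- phi) = delta k phi.
Proof. unfold delta. rewrite sin_neg. f_equal. ring. Qed.

Lemma delta_PI_minus phi : delta k (PI - phi) = delta k phi.
Proof. unfold delta. rewrite sin_PI_x. reflexivity. Qed.

Lemma is_derive_delta phi :
  is_derive (delta k) phi (- k ^ 2 * sin phi * cos phi / delta k phi).
Proof.
  pose proof (delta_sq_pos phi). pose proof (delta_pos phi).
  unfold delta in *. auto_derive; [lra |].
  replace (1 + - (k * (k * 1) * (sin phi * (sin phi * 1))))
    with (1 - k ^ 2 * sin phi ^ 2) by ring.
  field. lra.
Qed.

Lemma ex_derive_inv_delta t : ex_derive (fun t => / delta k t) t.
Proof.
  pose proof (delta_pos t). eexists.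
  apply (is_derive_inv (delta k)); [apply is_derive_delta | lra].
Qed.

Lemma continuous_inv_delta t : continuous (fun t => / delta k t) t.
Proof. exact (ex_derive_continuous _ _ (ex_derive_inv_delta t)). Qed.

Lemma ex_RInt_inv_delta a b : ex_RInt (fun t => / delta k t) a b.
Proof.
  apply (ex_RInt_continuous (V := R_CompleteNormedModule)).
  intros t _. apply continuous_inv_delta.
Qed.

Lemma is_derive_ellF phi : is_derive (ellF k) phi (/ delta k phi).
Proof.
  apply (is_derive_RInt (fun t => / delta k t) (ellF k) 0 phi).
  - apply filter_forall. intros b.
    apply (RInt_correct (fun t => / delta k t)), ex_RInt_inv_delta.
  - apply continuous_inv_delta.
Qed.

Lemma continuity_ellF : continuity (ellF k).
Proof.
  intros x. apply continuity_pt_filterlim, (ex_derive_continuous (ellF k)).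
  eexists. apply is_derive_ellF.
Qed.

Lemma ellF_sub a b : ellF k b - ellF k a = RInt (fun t => / delta k t) a b.
Proof.
  change (RInt (fun t => / delta k t) 0 b - RInt (fun t => / delta k t) 0 a
    = RInt (fun t => / delta k t) a b).
  rewrite <- (RInt_Chasles (fun t => / delta k t) 0 a b) by apply ex_RInt_inv_delta.
  change (plus ?x ?y) with (x + y). ring.
Qed.

(* The integrand [1 / delta] is at least 1. *)
Lemma ellF_sub_ge a b : a <= b -> b - a <= ellF k b - ellF k a.
Proof.
  intros hab. rewrite ellF_sub.
  replace (b - a) with (RInt (fun _ => 1) a b) by (rewrite RInt_const; apply Rmult_1_r).
  apply RInt_le; [exact hab | apply ex_RInt_const | apply ex_RInt_inv_delta |].
  intros t _. pose proof (delta_pos t). pose proof (delta_le_1 t).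
  rewrite <- Rinv_1. apply Rinv_le_contravar; lra.
Qed.

Lemma ellF_lt a b : a < b -> ellF k a < ellF k b.
Proof. intros hab. pose proof (ellF_sub_ge a b (Rlt_le _ _ hab)). lra. Qed.

Lemma ellF_inj a b : ellF k a = ellF k b -> a = b.
Proof.
  intros e. destruct (Rtotal_order a b) as [h | [h | h]]; auto;
    apply ellF_lt in h; lra.
Qed.

Lemma ellF_0 : ellF k 0 = 0.
Proof. unfold ellF. rewrite RInt_point. reflexivity. Qed.

Lemma ellF_surjective x : exists phi, ellF k phi = x.
Proof.
  set (a := - Rabs x - 1). set (b := Rabs x + 1).
  pose proof (Rle_abs x). pose proof (Rle_abs (- x)). rewrite Rabs_Ropp in *.
  pose proof (ellF_sub_ge a 0). pose proof (ellF_sub_ge 0 b). rewrite ellF_0 in *.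
  destruct (IVT (fun phi => ellF k phi - x) a b) as [z [_ hz]].
  - apply continuity_minus; [apply continuity_ellF | apply continuity_const].
    intros ? ?; reflexivity.
  - unfold a, b; lra.
  - unfold a in *; lra.
  - unfold b in *; lra.
  - exists z. lra.
Qed.

Lemma ellF_jam x : ellF k (jam k x) = x.
Proof. apply (epsilon_spec (inhabits 0) (fun phi => ellF k phi = x)), ellF_surjective. Qed.

Lemma jam_ellF phi : jam k (ellF k phi) = phi.
Proof. apply ellF_inj, ellF_jam. Qed.

Lemma jam_lt x y : x < y -> jam k x < jam k y.
Proof.
  intros hxy. destruct (Rlt_le_dec (jam k x) (jam k y)) as [h | h]; auto.
  apply Rle_lt_or_eq_dec in h as [h | h].
  - apply ellF_lt in h. rewrite !ellF_jam in h. lra.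
  - apply (f_equal (ellF k)) in h. rewrite !ellF_jam in h. lra.
Qed.

Lemma jam_le x y : x <= y -> jam k x <= jam k y.
Proof. intros [h | <-]; [left; apply jam_lt, h | right; reflexivity]. Qed.

Lemma continuity_pt_jam x : continuity_pt (jam k) x.
Proof.
  set (phi := jam k x).
  apply (continuity_pt_recip_interv (ellF k) (jam k) (phi - 1) (phi + 1)).
  - lra.
  - intros; apply ellF_lt; lra.
  - intros y _ _. apply ellF_jam.
  - intros y h1 h2. apply jam_le in h1, h2. rewrite jam_ellF in h1, h2. lra.
  - intros; apply continuity_ellF.
  - unfold phi. rewrite <- (ellF_jam x) at 2 3. split; apply ellF_lt; lra.
Qed.

Lemma is_derive_jam x : is_derive (jam k) x (delta k (jam k x)).
Proof.
  assert (hd : forall phi, derivable_pt (ellF k) phi)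
    by (intros phi; exists (/ delta k phi); apply is_derive_Reals, is_derive_ellF).
  assert (hx : jam k (x - 1) <= jam k x <= jam k (x + 1)) by (split; apply jam_le; lra).
  assert (e : derive_pt (ellF k) (jam k x) (hd (jam k x)) = / delta k (jam k x))
    by apply derive_pt_eq_0, is_derive_Reals, is_derive_ellF.
  pose proof (delta_pos (jam k x)).
  apply is_derive_Reals.
  replace (delta k (jam k x)) with (1 / derive_pt (ellF k) (jam k x) (hd (jam k x)))
    by (rewrite e; field; lra).
  apply (derivable_pt_lim_recip_interv (ellF k) (jam k) (x - 1) (x + 1) x (fun a _ => hd a)
           (continuity_pt_jam x) ltac:(lra) ltac:(lra) hx).
  - intros; apply ellF_jam.
  - rewrite e. apply Rinv_neq_0_compat. lra.
Qed.

Lemma ellF_opp phi : ellF k (- phi) = - ellF k phi.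
Proof.
  pose proof (RInt_reflect (fun t => / delta k t) 0 0 phi ex_RInt_inv_delta) as e.
  rewrite Rminus_0_r, Rminus_0_l in e.
  change (RInt (fun t => / delta k t) 0 (- phi) = - RInt (fun t => / delta k t) 0 phi).
  rewrite e by (intros; now rewrite Rminus_0_l, delta_opp).
  rewrite <- (opp_RInt_swap (fun t => / delta k t)) by apply ex_RInt_inv_delta.
  reflexivity.
Qed.

Lemma ellF_PI : ellF k PI = 2 * ellK k.
Proof.
  pose proof (RInt_reflect (fun t => / delta k t) PI (PI / 2) 0 ex_RInt_inv_delta) as e.
  replace (PI - PI / 2) with (PI / 2) in e by field. rewrite Rminus_0_r in e.
  change (RInt (fun t => / delta k t) 0 PI = 2 * RInt (fun t => / delta k t) 0 (PI / 2)).
  rewrite <- (RInt_Chasles (fun t => / delta k t) 0 (PI / 2) PI) by apply ex_RInt_inv_delta.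
  rewrite e by (intros; now rewrite delta_PI_minus).
  change (RInt (fun t => / delta k t) 0 (PI / 2) + RInt (fun t => / delta k t) 0 (PI / 2)
    = 2 * RInt (fun t => / delta k t) 0 (PI / 2)).
  ring.
Qed.

Lemma jam_range l : -2 * ellK k < l < 0 -> - PI < jam k l < 0.
Proof.
  intros [h1 h2]. apply jam_lt in h1, h2.
  replace (-2 * ellK k) with (ellF k (- PI)) in h1 by (rewrite ellF_opp, ellF_PI; ring).
  rewrite jam_ellF in h1.
  rewrite <- ellF_0, jam_ellF in h2. lra.
Qed.

Lemma ellF_range phi : - PI < phi < 0 -> -2 * ellK k < ellF k phi < 0.
Proof.
  intros [h1 h2]. apply ellF_lt in h1, h2.
  rewrite ellF_opp, ellF_PI in h1. rewrite ellF_0 in h2. lra.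
Qed.

End JacobiAmplitude.

(* [p] as a function of the amplitude: [pfun J1 J2 J3 l kap] is convertible to
   [p_am (kmod J1 J2 J3) (rho J1 J3) kap (jam _ l)], since [jdn k l = delta k (jam k l)]. *)
Definition p_am (k r kap phi : R) : R :=
  kap * (r * cos phi / sin phi) - 2 * (r / sin phi) * (r * delta k phi / sin phi).
Definition dp_scale (k r phi : R) : R := - r * delta k phi / sin phi ^ 2.
Definition dp_sign (k r kap phi : R) : R :=
  kap - 2 * r * (cos phi / sin phi) * (delta k phi + / delta k phi).
Definition dp_sign_deriv (k r phi : R) : R :=
  2 * r * ((1 + delta k phi ^ 2) * delta k phi ^ 2 - k ^ 4 * cos phi ^ 2 * sin phi ^ 4)
  / (delta k phi ^ 3 * sin phi ^ 2).

(* With [q = k^2] and [x = sin^2 phi] this says that the numerator of [dp_sign_deriv]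
   is positive. *)
Lemma quartic_ineq q x : 0 <= q < 1 -> 0 < x <= 1 ->
  q ^ 2 * (1 - x) * x ^ 2 < (2 - q * x) * (1 - q * x).
Proof.
  intros [h1 h2] [h3 h4].
  assert (0 <= q * x < 1) by (split; nra).
  assert (q ^ 2 * x ^ 2 <= 1) by nra.
  assert (q ^ 2 * (1 - x) * x ^ 2 <= 1 - x) by nra.
  assert (1 - x <= 1 - q * x) by nra.
  nra.
Qed.

Section Factorization.

Variables k r kap : R.
Hypothesis hk : k ^ 2 < 1.

Lemma is_derive_p_am phi : sin phi <> 0 ->
  is_derive (p_am k r kap) phi (dp_scale k r phi * dp_sign k r kap phi / delta k phi).
Proof.
  intros hs. pose proof (is_derive_delta k hk phi) as hd. pose proof (delta_pos k hk phi).
  pose proof (delta_sqr k hk phi) as hD. pose proof (sin2_cos2 phi) as hsc. unfold Rsqr in hsc.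
  unfold p_am. auto_derive.
  - repeat split; auto. exists (- k ^ 2 * sin phi * cos phi / delta k phi). exact hd.
  - replace (Derive (fun x => delta k x) phi) with (- k ^ 2 * sin phi * cos phi / delta k phi)
      by (symmetry; apply is_derive_unique, hd).
    unfold dp_scale, dp_sign.
    set (D := delta k phi) in *. set (s := sin phi) in *. set (c := cos phi) in *.
    match goal with |- ?a = ?b => change (@eq R a b) end.
    field_simplify_eq; [ | split; [lra|auto]].
    apply Rminus_diag_uniq.
    transitivity (- kap * r * s * D * (s * s + c * c - 1)
                  + 2 * r ^ 2 * c * (D ^ 2 - (1 - k ^ 2 * s ^ 2))); [ring |].
    rewrite hsc, hD. ring.
Qed.

Lemma is_derive_dp_sign phi : sin phi <> 0 ->
  is_derive (dp_sign k r kap) phi (dp_sign_deriv k r phi).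
Proof.
  intros hs. pose proof (is_derive_delta k hk phi) as hd. pose proof (delta_pos k hk phi).
  pose proof (delta_sqr k hk phi) as hD. pose proof (sin2_cos2 phi) as hsc. unfold Rsqr in hsc.
  unfold dp_sign. auto_derive.
  - repeat split; auto; try lra; exists (- k ^ 2 * sin phi * cos phi / delta k phi); exact hd.
  - replace (Derive (fun x => delta k x) phi) with (- k ^ 2 * sin phi * cos phi / delta k phi)
      by (symmetry; apply is_derive_unique, hd).
    unfold dp_sign_deriv.
    set (D := delta k phi) in *. set (s := sin phi) in *. set (c := cos phi) in *.
    match goal with |- ?a = ?b => change (@eq R a b) end.
    field_simplify_eq; [ | split; [lra|auto]]; [ | lra].
    apply Rminus_diag_uniq.
    transitivity (2 * r * (D ^ 4 + D ^ 2) * (s * s + c * c - 1)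
                  + 2 * r * s ^ 2 * c ^ 2 * k ^ 2 * (D ^ 2 - (1 - k ^ 2 * s ^ 2))); [ring |].
    rewrite hsc, hD. ring.
Qed.

Lemma dp_sign_deriv_pos phi : 0 < r -> sin phi <> 0 -> 0 < dp_sign_deriv k r phi.
Proof.
  intros hr hs. pose proof (delta_pos k hk phi) as hD0. pose proof (delta_sqr k hk phi) as hD.
  pose proof (sin2_cos2 phi) as hsc. unfold Rsqr in hsc.
  assert (hx : 0 < sin phi ^ 2 <= 1) by (split; [apply pow2_gt_0, hs | nra]).
  pose proof (quartic_ineq (k ^ 2) (sin phi ^ 2) (conj (pow2_ge_0 k) hk) hx).
  unfold dp_sign_deriv. apply Rdiv_lt_0_compat.
  - apply Rmult_lt_0_compat; [lra |].
    replace (k ^ 4 * cos phi ^ 2 * sin phi ^ 4)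
      with ((k ^ 2) ^ 2 * (1 - sin phi ^ 2) * (sin phi ^ 2) ^ 2) by (rewrite <- hsc; ring).
    rewrite hD. lra.
  - apply Rmult_lt_0_compat; [apply pow_lt, hD0 | apply hx].
Qed.

Lemma dp_scale_neg phi : 0 < r -> sin phi <> 0 -> dp_scale k r phi < 0.
Proof.
  intros hr hs. pose proof (delta_pos k hk phi). pose proof (pow2_gt_0 _ hs).
  unfold dp_scale, Rdiv. rewrite Ropp_mult_distr_l_reverse, Ropp_mult_distr_l_reverse.
  apply Ropp_lt_gt_0_contravar.
  apply Rmult_lt_0_compat; [nra | apply Rinv_0_lt_compat; lra].
Qed.

Lemma ex_derive_dp_scale phi : sin phi <> 0 -> ex_derive (dp_scale k r) phi.
Proof.
  intros hs. pose proof (is_derive_delta k hk phi) as hd.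
  unfold dp_scale. auto_derive.
  repeat split; auto. exists (- k ^ 2 * sin phi * cos phi / delta k phi). exact hd.
Qed.

Lemma dp_sign_increasing x y : 0 < r -> - PI < x -> x < y -> y < 0 ->
  dp_sign k r kap x < dp_sign k r kap y.
Proof.
  intros hr h1 h2 h3.
  apply (incr_function (dp_sign k r kap) (- PI) 0 (dp_sign_deriv k r)); simpl; auto.
  - intros t t1 t2. apply is_derive_dp_sign. pose proof (sin_lt_0_var t t1 t2). lra.
  - intros t t1 t2. apply dp_sign_deriv_pos; [exact hr |].
    pose proof (sin_lt_0_var t t1 t2). lra.
Qed.

Lemma dp_sign_root_unique x y : 0 < r -> - PI < x < 0 -> - PI < y < 0 ->
  dp_sign k r kap x = 0 -> dp_sign k r kap y = 0 -> x = y.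
Proof.
  intros hr [hx1 hx2] [hy1 hy2] ex ey.
  destruct (Rtotal_order x y) as [h | [h | h]]; [| exact h |].
  - pose proof (dp_sign_increasing x y hr hx1 h hy2). lra.
  - pose proof (dp_sign_increasing y x hr hy1 h hx2). lra.
Qed.

(* Clearing the denominator [delta * sin] of [dp_sign] gives a function continuous on
   [[-PI, 0]] whose sign at the endpoints is that of [-cos]. *)
Lemma dp_sign_root_exists : 0 < r -> exists z, - PI < z < 0 /\ dp_sign k r kap z = 0.
Proof.
  intros hr.
  set (G := fun phi => 2 * r * cos phi * (1 + delta k phi ^ 2) - kap * delta k phi * sin phi).
  assert (hG : continuity G).
  { intros x. pose proof (is_derive_delta k hk x) as hd.
    apply continuity_pt_filterlim, (ex_derive_continuous G).
    unfold G. auto_derive. repeat split; exists (- k ^ 2 * sin x * cos x / delta k x); exact hd. }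
  assert (G0 : 0 < G 0).
  { unfold G. rewrite cos_0, sin_0. pose proof (pow2_ge_0 (delta k 0)). nra. }
  assert (GPI : G (- PI) < 0).
  { unfold G. rewrite cos_neg, sin_neg, cos_PI, sin_PI. pose proof (pow2_ge_0 (delta k (- PI))). nra. }
  destruct (IVT G (- PI) 0 hG ltac:(pose proof PI_RGT_0; lra) ltac:(lra) ltac:(lra))
    as [z [hz hGz]].
  assert (hz' : - PI < z < 0)
    by (split; apply Rnot_le_lt; intros h; [assert (z = - PI) | assert (z = 0)]; subst; lra).
  exists z. split; [exact hz' |].
  pose proof (sin_lt_0_var z (proj1 hz') (proj2 hz')). pose proof (delta_pos k hk z).
  assert (e : dp_sign k r kap z = - G z / (delta k z * sin z))
    by (unfold dp_sign, G; field; split; lra).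
  rewrite e, hGz. field. split; lra.
Qed.

End Factorization.

Lemma is_derive_mult_root (f g : R -> R) (x df dg : R) :
  is_derive f x df -> is_derive g x dg -> g x = 0 ->
  is_derive (fun y => f y * g y) x (f x * dg).
Proof.
  intros hf hg hg0.
  replace (f x * dg) with (plus (mult df (g x)) (mult (f x) dg))
    by (rewrite hg0; change (df * 0 + f x * dg = f x * dg); ring).
  apply (is_derive_mult f g x df dg hf hg), Rmult_comm.
Qed.

Section AmplitudeSubstitution.

Variables k r kap : R.
Hypothesis hk : k ^ 2 < 1.
Hypothesis hr : 0 < r.

Lemma sin_jam_neg l : -2 * ellK k < l < 0 -> sin (jam k l) < 0.
Proof. intros hl. destruct (jam_range k hk l hl). apply sin_lt_0_var; assumption. Qed.

Lemma is_derive_p_am_jam l : sin (jam k l) <> 0 ->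
  is_derive (fun m => p_am k r kap (jam k m)) l
    (dp_scale k r (jam k l) * dp_sign k r kap (jam k l)).
Proof.
  intros hs. pose proof (delta_pos k hk (jam k l)).
  replace (dp_scale k r (jam k l) * dp_sign k r kap (jam k l))
    with (scal (delta k (jam k l))
            (dp_scale k r (jam k l) * dp_sign k r kap (jam k l) / delta k (jam k l)))
    by (change (scal ?a ?b) with (a * b); match goal with |- ?a = ?b => change (@eq R a b) end;
        field; lra).
  apply (is_derive_comp (p_am k r kap) (jam k));
    [apply is_derive_p_am; assumption | apply is_derive_jam, hk].
Qed.

Lemma is_derive_dp_at_root z : sin z <> 0 -> dp_sign k r kap z = 0 ->
  is_derive (fun l => dp_scale k r (jam k l) * dp_sign k r kap (jam k l)) (ellF k z)
    (dp_scale k r z * (delta k z * dp_sign_deriv k r z)).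
Proof.
  intros hs hz. rewrite <- (jam_ellF k hk z) at 2.
  eapply (is_derive_mult_root (fun l => dp_scale k r (jam k l)) (fun l => dp_sign k r kap (jam k l))).
  - apply (is_derive_comp (dp_scale k r)); [| apply is_derive_jam, hk].
    rewrite jam_ellF by exact hk. apply Derive_correct, ex_derive_dp_scale; assumption.
  - replace (delta k z * dp_sign_deriv k r z)
      with (scal (delta k (jam k (ellF k z))) (dp_sign_deriv k r (jam k (ellF k z))))
      by (rewrite jam_ellF by exact hk; reflexivity).
    apply (is_derive_comp (dp_sign k r kap)); [| apply is_derive_jam, hk].
    apply is_derive_dp_sign; [exact hk | rewrite jam_ellF; assumption].
  - rewrite jam_ellF; assumption.
Qed.

Lemma Derive_p_am_jam l : -2 * ellK k < l < 0 ->
  Derive (fun m => p_am k r kap (jam k m)) l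
  = dp_scale k r (jam k l) * dp_sign k r kap (jam k l).
Proof.
  intros hl. apply is_derive_unique, is_derive_p_am_jam.
  pose proof (sin_jam_neg l hl). lra.
Qed.

Lemma Derive_p_am_jam_eq_0 l : -2 * ellK k < l < 0 ->
  Derive (fun m => p_am k r kap (jam k m)) l = 0 <-> dp_sign k r kap (jam k l) = 0.
Proof.
  intros hl. rewrite Derive_p_am_jam by exact hl.
  pose proof (sin_jam_neg l hl). pose proof (dp_scale_neg k r hk (jam k l) hr ltac:(lra)).
  split; [intros e; apply Rmult_integral in e as [e | e]; [lra | exact e] |].
  intros ->. ring.
Qed.

Lemma Derive2_p_am_jam_root_neg z : - PI < z < 0 -> dp_sign k r kap z = 0 ->
  Derive (fun l => Derive (fun m => p_am k r kap (jam k m)) l) (ellF k z) < 0.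
Proof.
  intros hz hz0. pose proof (sin_lt_0_var z (proj1 hz) (proj2 hz)).
  erewrite is_derive_unique; [| eapply is_derive_ext_loc].
  2: { apply filter_imp with (fun t => -2 * ellK k < t /\ t < 0).
       - intros t ht. symmetry. apply Derive_p_am_jam, ht.
       - apply (open_and _ _ (open_gt _) (open_lt _)), ellF_range; assumption. }
  2: { apply is_derive_dp_at_root; [lra | exact hz0]. }
  pose proof (dp_scale_neg k r hk z hr ltac:(lra)). pose proof (delta_pos k hk z).
  pose proof (dp_sign_deriv_pos k r hk z hr ltac:(lra)).
  apply Rmult_neg_pos; [assumption | apply Rmult_lt_0_compat; assumption].
Qed.

End AmplitudeSubstitution.

Lemma kmod_sq_lt_1 J1 J2 J3 : J1 < J2 -> J2 < J3 -> kmod J1 J2 J3 ^ 2 < 1.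
Proof.
  intros h12 h23. unfold kmod.
  assert (0 < J3 - J1) by lra.
  rewrite pow2_sqrt by (left; apply Rdiv_lt_0_compat; lra).
  apply (Rmult_lt_reg_r (J3 - J1)); [lra |].
  unfold Rdiv. rewrite Rmult_assoc, Rinv_l; lra.
Qed.

Lemma rho_pos J1 J3 : J1 < J3 -> 0 < rho J1 J3.
Proof. intros h. apply Rdiv_lt_0_compat; [apply sqrt_lt_R0 |]; lra. Qed.

Theorem mainTheorem11 (J1 J2 J3 kappa : R)
  (h12 : J1 < J2) (h23 : J2 < J3) (hkappa : 0 < kappa) :
  let K := ellK (kmod J1 J2 J3) in
  let dp := fun l => Derive (fun m => pfun J1 J2 J3 m kappa) l in
  exists l0 : R,
    (-2 * K < l0 < 0 /\ dp l0 = 0) /\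
    (forall l : R, -2 * K < l < 0 -> dp l = 0 -> l = l0) /\
    Derive dp l0 < 0.
Proof.
  intros K dp.
  set (k := kmod J1 J2 J3) in *. set (r := rho J1 J3).
  pose proof (kmod_sq_lt_1 J1 J2 J3 h12 h23) as hk.
  pose proof (rho_pos J1 J3 ltac:(lra)) as hr.
  destruct (dp_sign_root_exists k r kappa hk hr) as [z [hz hz0]].
  pose proof (ellF_range k hk z hz) as hl0.
  exists (ellF k z). split; [| split].
  - split; [exact hl0 |].
    apply (Derive_p_am_jam_eq_0 k r kappa hk hr); [exact hl0 |].
    rewrite jam_ellF; assumption.
  - intros l hl hdp.
    apply (Derive_p_am_jam_eq_0 k r kappa hk hr) in hdp; [| exact hl].
    rewrite <- (ellF_jam k hk l). f_equal.
    apply (dp_sign_root_unique k r kappa hk); [exact hr | apply jam_range | | |]; assumption.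
  - exact (Derive2_p_am_jam_root_neg k r kappa hk hr z hz hz0).
Qed.
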